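(* Let $m \geq 1$ and let $n = p_1 p_2 \cdots p_m$, where $p_1 < p_2 < \cdots < p_m$ are primes. Then the zero-divisor graph $\Gamma(\mathbb{Z}_n)$ is a very cost effective graph.
   Context: $\mathbb{Z}_n$ is the ring of residue classes modulo $n$. The zero-divisor graph $\Gamma(\mathbb{Z}_n)$ has as vertices the nonzero zero-divisors of $\mathbb{Z}_n$ (nonzero $z$ such that $rz=0$ for some nonzero $r$), two distinct vertices being adjacent iff their product is $0$. For a graph $G=(V,E)$ and $S\subseteq V$, a vertex $v\in S$ is very cost effective if $|N(v)\cap S| < |N(v)\cap (V\setminus S)|$, where $N(v)$ is the open neighborhood of $v$; $S$ is very cost effective if every vertex of $S$ is very cost effective. A bipartition $\{S, V\setminus S\}$ of $V$ is very cost effective if both $S$ and $V\setminus S$ are very cost effective sets, and $G$ is a very cost effective graph if it has a very cost effective bipartition. *)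

From mathcomp Require Import all_boot.
Set Implicit Arguments. Unset Strict Implicit. Unset Printing Implicit Defensive.

(* A finite simple graph is given by a vertex set V : {set T} and a
   symmetric irreflexive adjacency relation adj (only its restriction to V matters). *)
Section Graph.
Variable T : finType.

Definition nbhd (V : {set T}) (adj : rel T) (v : T) : {set T} :=
  [set u in V | adj v u].

Definition vce_vertex (V : {set T}) (adj : rel T) (S : {set T}) (v : T) : bool :=
  #|nbhd V adj v :&: S| < #|nbhd V adj v :&: (V :\: S)|.

Definition vce_set (V : {set T}) (adj : rel T) (S : {set T}) : bool :=
  [forall v in S, vce_vertex V adj S v].

Definition vce_bipartition (V : {set T}) (adj : rel T) (S : {set T}) : bool :=
  [&& S \subset V, vce_set V adj S & vce_set V adj (V :\: S)].

Definition vce_graph (V : {set T}) (adj : rel T) : Prop :=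
  exists S : {set T}, vce_bipartition V adj S.
End Graph.

(* Zero-divisor graph of Z_n, residues represented by 'I_n. *)
Definition zd_vertices (n : nat) : {set 'I_n} :=
  [set x : 'I_n | (x != 0 :> nat) &&
     [exists y : 'I_n, (y != 0 :> nat) && ((x * y) %% n == 0)]].

Definition zd_adj (n : nat) : rel 'I_n :=
  fun x y => (x != y) && ((x * y) %% n == 0).

From mathcomp Require Import all_boot.

Set Implicit Arguments.
Unset Strict Implicit.
Unset Printing Implicit Defensive.

(** Let p be a prime factor of the squarefree number n and let S be the set
    of zero-divisors that are multiples of p.  A zero-divisor x outside
    S is annihilated only by multiples of p, so all its neighbours lie in S, and
    it has one: the cofactor q = n / gcd(x, n).  For x in S the cofactor q is
    prime to p (otherwise p^2 would divide n), and translation by q maps the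
    neighbours of x in S injectively to neighbours of x outside S, while missing
    q itself (the image of 0, which is not a vertex). *)

Lemma card_lt_injection (aT rT : finType) (A : {set aT}) (B : {set rT})
    (f : aT -> rT) (w : rT) :
  injective f -> {in A, forall y, f y \in B} -> w \in B -> w \notin f @: A ->
  #|A| < #|B|.
Proof.
move=> f_inj fAB wB wfA; rewrite -(card_imset _ f_inj); apply: proper_card.
apply/properP; split; last by exists w.
by apply/subsetP => _ /imsetP[y yA ->]; exact: fAB.
Qed.

Section VeryCostEffective.
Variables (T : finType) (V : {set T}) (adj : rel T).

Lemma nbhd_in_vertices v u : u \in nbhd V adj v -> u \in V.
Proof. by rewrite inE => /andP[]. Qed.

Lemma nbhd_subset v : nbhd V adj v \subset V.
Proof. by apply/subsetP => u /nbhd_in_vertices. Qed.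

Lemma vce_vertex_setD S v :
  vce_vertex V adj (V :\: S) v =
  (#|nbhd V adj v :&: (V :\: S)| < #|nbhd V adj v :&: S|).
Proof.
by rewrite /vce_vertex setDDr setDv set0U setIA (setIidPl (nbhd_subset v)).
Qed.

End VeryCostEffective.

Lemma dvdn_mul_divn_gcd x n : n %| x * (n %/ gcdn x n).
Proof. by rewrite muln_divCA_gcd dvdn_mulr. Qed.

Lemma prime_dvdn_divn_gcd p n x :
  prime p -> p %| n -> ~~ (p * p %| n) -> (p %| n %/ gcdn x n) = ~~ (p %| x).
Proof.
move=> p_pr p_n p2_n; have n_eq : n = n %/ gcdn x n * gcdn x n.
  by rewrite divnK ?dvdn_gcdr.
case: (boolP (p %| x)) => p_x /=.
- apply/negP => p_q; move/negP: p2_n; apply; rewrite n_eq dvdn_mul //.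
  by rewrite dvdn_gcd p_x.
- move: p_n; rewrite {1}n_eq Euclid_dvdM // => /orP[// | p_g].
  by rewrite (dvdn_trans p_g (dvdn_gcdl x n)) in p_x.
Qed.

Lemma prime_ndvd_prod_primes p t :
  prime p -> all prime t -> p \notin t -> ~~ (p %| \prod_(q <- t) q).
Proof.
move=> p_pr t_pr p_t; rewrite Euclid_dvd_prod // big_has.
apply/hasP => -[q q_t]; rewrite dvdn_prime2 //; last exact: (allP t_pr).
by move/eqP => pq; rewrite pq q_t in p_t.
Qed.

Section ZeroDivisorGraph.
Variable n : nat.
Local Notation V := (zd_vertices n).
Local Notation N := (nbhd V (@zd_adj n)).

Lemma mem_zd_nbhd (x u : 'I_n) :
  x \in V -> (u \in N x) = [&& u != 0 :> nat, x != u & n %| x * u].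
Proof.
rewrite !inE => /andP[x_0 _]; apply/idP/idP => [/andP[/andP[-> _] //] | ].
case/and3P=> u_0 xu n_xu; rewrite /zd_adj u_0 xu /=; apply/andP; split=> //.
by apply/existsP; exists x; rewrite x_0 mulnC; exact: n_xu.
Qed.

Lemma zd_cofactor_lt (x : 'I_n) : x \in V -> n %/ gcdn x n < n.
Proof.
rewrite inE => /andP[_ /existsP[y /andP[y_0 n_xy]]].
have n_gt0 : 0 < n := leq_ltn_trans (leq0n _) (ltn_ord x).
rewrite ltn_Pdiv // ltn_neqAle gcdn_gt0 n_gt0 orbT andbT eq_sym.
apply/eqP => coprime_xn; move: n_xy.
rewrite -[_ == 0]/(n %| x * y) Gauss_dvdr; last first.
  by rewrite coprime_sym; apply/eqP.
by move/dvdn_leq; rewrite lt0n y_0 leqNgt ltn_ord => /(_ isT).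
Qed.

End ZeroDivisorGraph.

Section PrimeMultiples.
Variables (n p : nat).
Hypotheses (p_pr : prime p) (p_dvd_n : p %| n) (p2_ndvd_n : ~~ (p * p %| n)).
Local Notation V := (zd_vertices n).
Local Notation N := (nbhd V (@zd_adj n)).
Let S := [set x in V | p %| x].

Lemma zd_nbhd_opposite_dvd (x : 'I_n) :
  x \in V -> exists2 q : 'I_n, q \in N x & (p %| q) = ~~ (p %| x).
Proof.
move=> xV; have p_q := prime_dvdn_divn_gcd x p_pr p_dvd_n p2_ndvd_n.
have n_gt0 : 0 < n := leq_ltn_trans (leq0n _) (ltn_ord x).
exists (Ordinal (zd_cofactor_lt xV)) => //.
rewrite mem_zd_nbhd //= dvdn_mul_divn_gcd andbT -lt0n.
rewrite divn_gt0 ?gcdn_gt0 ?n_gt0 ?orbT // dvdn_leq ?dvdn_gcdr //=.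
by apply/eqP => /(congr1 val) /= xq; move: p_q; rewrite -xq; case: (p %| x).
Qed.

Lemma zd_nbhd_dvd (x u : 'I_n) : ~~ (p %| x) -> u \in N x -> p %| u.
Proof.
move=> p_x; rewrite inE => /andP[_ /andP[_ n_xu]].
by have := dvdn_trans p_dvd_n n_xu; rewrite Euclid_dvdM // (negbTE p_x).
Qed.

Lemma mem_nbhd_setI (x u : 'I_n) : (u \in N x :&: S) = (u \in N x) && (p %| u).
Proof.
by rewrite in_setI [u \in S]inE andbA (andb_idr (@nbhd_in_vertices _ _ _ x u)).
Qed.

Lemma mem_nbhd_setD (x u : 'I_n) :
  (u \in N x :&: (V :\: S)) = (u \in N x) && ~~ (p %| u).
Proof.
rewrite in_setI in_setD [u \in S]inE.
by case: (boolP (u \in N x)) => [/nbhd_in_vertices -> | ]; rewrite ?andbT.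
Qed.

Lemma vce_vertex_prime_multiple (x : 'I_n) :
  x \in S -> vce_vertex V (@zd_adj n) S x.
Proof.
rewrite inE => /andP[xV p_x]; have [q q_N] := zd_nbhd_opposite_dvd xV.
rewrite p_x => /negbT p_q.
have n_gt0 : 0 < n := leq_ltn_trans (leq0n _) (ltn_ord x).
pose shift (y : 'I_n) : 'I_n := Ordinal (ltn_pmod (y + q) n_gt0).
have shift_inj : injective shift.
  move=> y z /(congr1 val) /= /eqP; rewrite eqn_modDr !modn_small //.
  by move/eqP/val_inj.
apply: (card_lt_injection (w := q) shift_inj).
- move=> y; rewrite mem_nbhd_setI mem_nbhd_setD !mem_zd_nbhd //.
  case/andP=> /and3P[_ _ n_xy] p_y.
  have p_shift : p %| shift y = false.
    rewrite /dvdn /= (modn_dvdm _ p_dvd_n) -/(dvdn _ _).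
    by rewrite dvdn_addr // (negbTE p_q).
  have n_xshift : n %| x * shift y.
    rewrite /dvdn /= modnMmr -/(dvdn _ _) mulnDr dvdn_addr //.
    by move: q_N; rewrite mem_zd_nbhd // => /and3P[].
  rewrite n_xshift p_shift !andbT.
  apply/andP; split; apply: contraFneq _ p_shift; first by move=> ->.
  by move=> <-.
- by rewrite mem_nbhd_setD q_N.
- apply/imsetP => -[y]; rewrite mem_nbhd_setI => /andP[y_N _] q_shift.
  have shift0 : shift (Ordinal n_gt0) = q.
    by apply: val_inj; rewrite /= add0n modn_small.
  have y_0 : y = Ordinal n_gt0 by apply: shift_inj; rewrite shift0 q_shift.
  by move: y_N; rewrite mem_zd_nbhd // y_0 eqxx.
Qed.

Lemma vce_vertex_prime_nonmultiple (x : 'I_n) :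
  x \in V :\: S -> vce_vertex V (@zd_adj n) (V :\: S) x.
Proof.
rewrite in_setD [x \in S]inE negb_and => /andP[p_x xV]; rewrite xV /= in p_x.
have [q q_N] := zd_nbhd_opposite_dvd xV; rewrite (negbTE p_x) => p_q.
rewrite vce_vertex_setD.
have -> : N x :&: (V :\: S) = set0.
  apply/setP => u; rewrite mem_nbhd_setD in_set0.
  by case: (boolP (u \in N x)) => [/(zd_nbhd_dvd p_x) -> | ].
by rewrite cards0 card_gt0; apply/set0Pn; exists q; rewrite mem_nbhd_setI q_N.
Qed.

Lemma vce_bipartition_prime_multiples : vce_bipartition V (@zd_adj n) S.
Proof.
apply/and3P; split.
- by apply/subsetP => x; rewrite inE => /andP[].
- by apply/forall_inP; exact: vce_vertex_prime_multiple.
- by apply/forall_inP; exact: vce_vertex_prime_nonmultiple.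
Qed.

End PrimeMultiples.

Theorem mainTheorem1 (ps : seq nat) :
  1 <= size ps -> sorted ltn ps -> all prime ps ->
  vce_graph (zd_vertices (\prod_(p <- ps) p)) (@zd_adj (\prod_(p <- ps) p)).
Proof.
case: ps => [// | p t] _ /(sorted_uniq ltn_trans ltnn) /andP[p_t _].
case/andP=> p_pr t_pr; eexists; apply: (vce_bipartition_prime_multiples p_pr).
- by rewrite big_cons dvdn_mulr.
- by rewrite big_cons dvdn_pmul2l ?prime_gt0 ?prime_ndvd_prod_primes.
Qed.
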